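(* Let $W$ be a finite Weyl group and $\tilde W=W\ltimes Z$ its affine Weyl group, with elements written $(a,\mathbf u)$, $a\in W$, $\mathbf u\in Z$. Let $X$ be a conjugacy class of involutions of $\tilde W$, and for $x=(a,\mathbf u)\in X$ write $\hat x=a$; let $\hat X$ be the conjugacy class of $\hat x$ in $W$ (this does not depend on the choice of $x\in X$). Suppose $x,y\in X$. If $d(\hat x,\hat y)=k$ in $\mathcal{C}(W,\hat X)$, then $d(x,y)\ge k$ in $\mathcal{C}(\tilde W,X)$. If $\mathcal{C}(W,\hat X)$ is disconnected, then $\mathcal{C}(\tilde W,X)$ is disconnected.
   Context: $W$ is a finite Weyl group with root system $\Phi$ in a Euclidean space $V\cong\mathbb{R}^n$, $\alpha^\vee=2\alpha/\langle\alpha,\alpha\rangle$, and $Z$ is the coroot lattice $L(\Phi^\vee)$ viewed as a group of translations. The affine Weyl group $\tilde W$ is the semidirect product of $W$ and $Z$, with elements $(a,\mathbf u)$ and multiplication $(a,\mathbf u)(b,\mathbf v)=(ab,\mathbf u^b+\mathbf v)$, where $\mathbf u\mapsto\mathbf u^b$ denotes the (right) linear action of $W$ on $V$. For a group $G$ and a set $X$ of involutions, $\mathcal{C}(G,X)$ is the graph on $X$ with $x,y$ adjacent iff they commute, and $d(x,y)$ denotes graph distance. *)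

From HB Require Import structures.
From mathcomp Require Import all_boot all_order all_algebra.
From mathcomp Require Import reals.
Set Implicit Arguments.
Unset Strict Implicit.
Unset Printing Implicit Defensive.
Import Order.TTheory GRing.Theory Num.Theory.
Local Open Scope ring_scope.

Section Graph.
Variable T : Type.
Variable V : T -> Prop.
Variable adj : T -> T -> Prop.

Definition walk (x y : T) (k : nat) : Prop :=
  exists f : nat -> T, [/\ f 0%N = x, f k = y,
    (forall i, (i <= k)%N -> V (f i)) &
    (forall i, (i < k)%N -> adj (f i) (f i.+1))].

Definition dist_eq (x y : T) (k : nat) : Prop :=
  walk x y k /\ forall j, (j < k)%N -> ~ walk x y j.

(* d(x,y) >= k  (d may be infinite) *)
Definition dist_ge (x y : T) (k : nat) : Prop :=
  forall j, (j < k)%N -> ~ walk x y j.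

Definition disconnected : Prop :=
  exists x y, [/\ V x, V y & forall k, ~ walk x y k].
End Graph.

Section Weyl.
Variable R : realType.
Variable n : nat.

Definition dotv (u v : 'rV[R]_n) : R := (u *m v^T) 0 0.

Definition coroot (a : 'rV[R]_n) : 'rV[R]_n := (2 / dotv a a) *: a.

(* reflection s_alpha : v |-> v - <v, alpha^vee> alpha, acting on the right
   on row vectors: v *m refl a *)
Definition refl (a : 'rV[R]_n) : 'M[R]_n := 1%:M - (coroot a)^T *m a.

(* (reduced, crystallographic) root system spanning V *)
Definition is_root_system (Phi : seq 'rV[R]_n) : Prop :=
  [/\ \rank (\matrix_(i < size Phi) nth 0 Phi i) = n,
      0 \notin Phi,
      forall a (c : R), a \in Phi -> c *: a \in Phi -> c = 1 \/ c = -1,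
      forall a b, a \in Phi -> b \in Phi -> b *m refl a \in Phi &
      forall a b, a \in Phi -> b \in Phi -> dotv b (coroot a) \is a Num.int].

Definition in_W (Phi : seq 'rV[R]_n) (M : 'M[R]_n) : Prop :=
  exists s : seq 'rV[R]_n,
    all (fun a => a \in Phi) s /\ M = foldr (fun a N => refl a *m N) 1%:M s.

Definition in_Z (Phi : seq 'rV[R]_n) (u : 'rV[R]_n) : Prop :=
  exists cs : seq (int * 'rV[R]_n),
    all (fun p => p.2 \in Phi) cs /\
    u = \sum_(p <- cs) (p.1)%:~R *: coroot p.2.

Definition aff := ('M[R]_n * 'rV[R]_n)%type.
Definition in_Wt (Phi : seq 'rV[R]_n) (x : aff) : Prop :=
  in_W Phi x.1 /\ in_Z Phi x.2.
Definition aff_mul (x y : aff) : aff := (x.1 *m y.1, x.2 *m y.1 + y.2).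
Definition aff_one : aff := (1%:M, 0).
Definition aff_inv (x : aff) : aff := (invmx x.1, - (x.2 *m invmx x.1)).

Definition W_involution (Phi : seq 'rV[R]_n) (a : 'M[R]_n) : Prop :=
  [/\ in_W Phi a, a *m a = 1%:M & a <> 1%:M].
Definition Wt_involution (Phi : seq 'rV[R]_n) (x : aff) : Prop :=
  [/\ in_Wt Phi x, aff_mul x x = aff_one & x <> aff_one].

Definition W_class (Phi : seq 'rV[R]_n) (a0 b : 'M[R]_n) : Prop :=
  exists g, in_W Phi g /\ b = g *m a0 *m invmx g.
Definition Wt_class (Phi : seq 'rV[R]_n) (x0 y : aff) : Prop :=
  exists g, in_Wt Phi g /\ y = aff_mul (aff_mul g x0) (aff_inv g).

Definition W_comm (a b : 'M[R]_n) : Prop := a *m b = b *m a /\ a <> b.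
Definition Wt_comm (x y : aff) : Prop := aff_mul x y = aff_mul y x /\ x <> y.
End Weyl.

(* The projection (a, u) |-> a maps the class X into the class of its image
   in W, and maps commuting pairs to pairs that commute or coincide.  Hence a
   walk in C(W~, X) projects to a walk in C(W, X^) that is no longer, once
   consecutive repetitions are dropped; and every element of X^ lifts to X by
   conjugating with a translation-free element (g, 0). *)
From HB Require Import structures.
From mathcomp Require Import all_boot all_order all_algebra.
From mathcomp Require Import reals.
Set Implicit Arguments.
Unset Strict Implicit.
Unset Printing Implicit Defensive.
Import GRing.Theory Num.Theory.
Local Open Scope ring_scope.

Section WalkCollapse.
Variables (T : Type) (V : T -> Prop) (adj : T -> T -> Prop).

Lemma walk_of_lazy_walk (f : nat -> T) (j : nat) :
  (forall i, (i <= j)%N -> V (f i)) ->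
  (forall i, (i < j)%N -> f i = f i.+1 \/ adj (f i) (f i.+1)) ->
  exists2 j', (j' <= j)%N & walk V adj (f 0%N) (f j) j'.
Proof.
elim: j => [|j IH] fV fstep.
  by exists 0%N => //; exists f; split => // -[].
have [j' le_j'j [g [g0 gj gV gadj]]] :
    exists2 j', (j' <= j)%N & walk V adj (f 0%N) (f j) j'.
  by apply: IH => i lt_ij; [apply/fV/leqW | apply/fstep/ltnW].
case: (fstep j (ltnSn j)) => [fj_eq | fj_adj].
  by exists j'; [exact: leqW | rewrite -fj_eq; exists g].
exists j'.+1 => //.
exists (fun i => if (i <= j')%N then g i else f j.+1); split.
- by rewrite leq0n g0.
- by rewrite ltnn.
- by move=> i _; case: ifP => [/gV | _]; last exact: fV.
- move=> i lt_ij'; rewrite -ltnS lt_ij'; case: ifP => [le_ij' | /negbT].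
    exact: gadj.
  rewrite -ltnNge ltnS => le_j'i.
  have -> : i = j' by apply/eqP; rewrite eqn_leq -ltnS lt_ij' le_j'i.
  by rewrite gj.
Qed.

End WalkCollapse.

Section WeakHomomorphism.
Variables (T U : Type) (VT : T -> Prop) (adjT : T -> T -> Prop).
Variables (VU : U -> Prop) (adjU : U -> U -> Prop) (p : T -> U).
Hypothesis p_vertex : forall x, VT x -> VU (p x).
Hypothesis p_adj : forall x y, adjT x y -> p x = p y \/ adjU (p x) (p y).

Lemma walk_map x y j : walk VT adjT x y j ->
  exists2 j', (j' <= j)%N & walk VU adjU (p x) (p y) j'.
Proof.
case=> f [<- <- fV fadj].
apply: (@walk_of_lazy_walk _ _ _ (p \o f)) => i i_bound.
  exact/p_vertex/fV.
exact/p_adj/fadj.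
Qed.

Lemma dist_ge_map x y k : dist_ge VU adjU (p x) (p y) k -> dist_ge VT adjT x y k.
Proof.
move=> far j lt_jk /walk_map[j' le_j'j walk_j'].
exact: far (leq_ltn_trans le_j'j lt_jk) walk_j'.
Qed.

Lemma disconnected_map :
  (forall u, VU u -> exists2 x, VT x & p x = u) ->
  disconnected VU adjU -> disconnected VT adjT.
Proof.
move=> p_onto [u [v [/p_onto[x VTx <-] /p_onto[y VTy <-] no_walk]]].
exists x, y; split=> // k /walk_map[j _]; exact: no_walk.
Qed.

End WeakHomomorphism.

Section AffineProjection.
Variables (R : realType) (n : nat) (Phi : seq 'rV[R]_n) (x0 : aff R n).

Lemma Wt_class_fst z : Wt_class Phi x0 z -> W_class Phi x0.1 z.1.
Proof. by case=> g [[Wg _] ->]; exists g.1. Qed.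

Lemma Wt_comm_fst (x y : aff R n) :
  Wt_comm x y -> x.1 = y.1 \/ W_comm x.1 y.1.
Proof.
case=> /(congr1 fst) comm_xy _.
by case: (eqVneq x.1 y.1) => [|/eqP ne_xy]; [left | right].
Qed.

Lemma in_Z0 : in_Z Phi 0.
Proof. by exists [::]; rewrite big_nil. Qed.

Lemma W_class_lift a :
  W_class Phi x0.1 a -> exists2 x, Wt_class Phi x0 x & x.1 = a.
Proof.
case=> g [Wg ->].
exists (aff_mul (aff_mul (g, 0) x0) (aff_inv (g, 0))) => //.
by exists (g, 0); split; first exact: (conj Wg in_Z0).
Qed.

End AffineProjection.

Theorem lemma2p1 (R : realType) (n : nat) (Phi : seq 'rV[R]_n)
  (x0 : 'M[R]_n * 'rV[R]_n) :
  is_root_system Phi -> Wt_involution Phi x0 ->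
  (forall (x y : 'M[R]_n * 'rV[R]_n) (k : nat),
     Wt_class Phi x0 x -> Wt_class Phi x0 y ->
     dist_eq (W_class Phi x0.1) (@W_comm R n) x.1 y.1 k ->
     dist_ge (Wt_class Phi x0) (@Wt_comm R n) x y k) /\
  (disconnected (W_class Phi x0.1) (@W_comm R n) ->
   disconnected (Wt_class Phi x0) (@Wt_comm R n)).
Proof.
move=> _ _.
have p_vertex := @Wt_class_fst R n Phi x0.
have p_adj := @Wt_comm_fst R n.
split.
  move=> x y k _ _ [_].
  exact: (dist_ge_map p_vertex p_adj).
exact/(disconnected_map p_vertex p_adj)/W_class_lift.
Qed.
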